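(* Let $a=(a_2,\dots,a_k)$ be a tuple of nonnegative integers, not all zero, and let $2^p$ be the largest power of $2$ dividing all $a_i$. (1) If $\binom{|a|}{a}\equiv 1\pmod 2$, then there is a unique index $l$ such that $\binom{|a|-1}{\hat a_l}\equiv 1\pmod 2$; it is the unique index with $2^{p+1}\nmid a_l$. (2) If $\binom{|a|}{a}\equiv 0\pmod 2$ and $\binom{|a|-1}{\hat a_j}\equiv 1\pmod 2$ for some $j$, then there is a unique index $l\neq j$ with $\binom{|a|-1}{\hat a_l}\equiv 1\pmod 2$; it is the unique index other than $j$ with $2^{p+1}\nmid a_l$.
   Context: $|a|=a_2+\dots+a_k$ and $\binom{|a|}{a}=\frac{|a|!}{a_2!\cdots a_k!}$ is the multinomial coefficient. $\hat a_j=(a_2,\dots,a_j-1,\dots,a_k)$; the multinomial coefficient of a tuple with a negative entry is defined to be $0$. *)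

From mathcomp Require Import all_boot.
Set Implicit Arguments. Unset Strict Implicit. Unset Printing Implicit Defensive.

(* A tuple a = (a_2, ..., a_k) is represented as a : 'I_n -> nat (n = k-1). *)

Definition absn (n : nat) (a : 'I_n -> nat) : nat := \sum_(i < n) a i.

Definition multinom (n : nat) (a : 'I_n -> nat) : nat :=
  (absn a)`! %/ \prod_(i < n) (a i)`!.

Definition hat (n : nat) (a : 'I_n -> nat) (j : 'I_n) : 'I_n -> nat :=
  fun i => if i == j then (a j).-1 else a i.

(* multinomial coefficient of hat a_j; 0 when a_j - 1 would be negative *)
Definition multinom_hat (n : nat) (a : 'I_n -> nat) (j : 'I_n) : nat :=
  if a j == 0 then 0 else multinom (hat a j).

From mathcomp Require Import all_boot.
From mathcomp Require Import zify.
Set Implicit Arguments. Unset Strict Implicit. Unset Printing Implicit Defensive.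

(* By Legendre's formula, a prime q divides the multinomial coefficient of x
   iff some truncation to the lowest k base-q digits overflows, i.e. the
   residues x_i mod q^k sum to at least q^k ("Kummer": adding the x_i in base
   q produces a carry).  When every a_i is divisible by 2^p, only the indices
   with a_i = 2^p mod 2^(p+1) matter: decrementing such an entry turns its low
   p bits into ones without carrying, and removes one unit from every higher
   truncation, so the parity of multinom (hat a l) is the same for all of
   them.  Decrementing an entry divisible by 2^(p+1) instead creates a residue
   2^(p+1) - 1, which collides with any other index of exact valuation p. *)

Definition summod (n : nat) (x : 'I_n -> nat) (d : nat) : nat :=
  \sum_(i < n) x i %% d.

Section Kummer.

Variables (n : nat) (x : 'I_n -> nat).

Lemma prod_fact_dvd_fact_sum : \prod_(i < n) (x i)`! %| (\sum_(i < n) x i)`!.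
Proof.
elim: n x => [|m IH] y; first by rewrite !big_ord0.
rewrite !big_ord_recr /=.
set S := \sum_(i < m) _; have := bin_fact (leq_addl S (y ord_max)).
rewrite addnK => <-.
by rewrite mulnCA [X in _ %| X]mulnC dvdn_mul // dvdn_mull.
Qed.

Lemma multinomE : (absn x)`! = multinom x * \prod_(i < n) (x i)`!.
Proof. by rewrite /multinom divnK // prod_fact_dvd_fact_sum. Qed.

Lemma multinom_gt0 : 0 < multinom x.
Proof. by move: (fact_gt0 (absn x)); rewrite multinomE muln_gt0 => /andP[]. Qed.

Lemma logn_prod q (F : 'I_n -> nat) : (forall i, 0 < F i) ->
  logn q (\prod_(i < n) F i) = \sum_(i < n) logn q (F i).
Proof.
move=> F_gt0.
suff [] : 0 < \prod_(i < n) F i /\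
  logn q (\prod_(i < n) F i) = \sum_(i < n) logn q (F i) by [].
apply: (big_rec2 (fun u v => 0 < u /\ logn q u = v)) => [|i u v _ [u_gt0 <-]].
  by rewrite logn1.
by rewrite muln_gt0 F_gt0 u_gt0 lognM.
Qed.

Lemma logn_fact_le q m N : prime q -> m <= N ->
  logn q m`! = \sum_(1 <= k < N.+1) m %/ q ^ k.
Proof.
move=> q_pr le_mN; rewrite logn_fact // [RHS](@big_cat_nat _ _ _ m.+1) //=.
rewrite [X in _ + X]big1_seq ?addn0 // => k /andP[_].
rewrite mem_index_iota => /andP[lt_mk _]; apply: divn_small.
exact: leq_trans lt_mk (ltnW (ltn_expl _ (prime_gt1 q_pr))).
Qed.

Lemma divn_sum d : 0 < d ->
  (\sum_(i < n) x i) %/ d = \sum_(i < n) x i %/ d + summod x d %/ d.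
Proof.
move=> d_gt0; rewrite (eq_bigr (fun i => x i %/ d * d + x i %% d)) => [|i _].
  by rewrite big_split /= -big_distrl /= divnMDl.
by rewrite -divn_eq.
Qed.

Lemma logn_multinom q : prime q ->
  logn q (multinom x) = \sum_(1 <= k < (absn x).+1) summod x (q ^ k) %/ q ^ k.
Proof.
move=> q_pr; have q_gt0 := prime_gt0 q_pr.
have := congr1 (logn q) multinomE.
rewrite lognM ?multinom_gt0 ?prodn_gt0 // => [|i]; last exact: fact_gt0.
rewrite logn_prod => [|i]; last exact: fact_gt0.
rewrite (logn_fact_le q_pr (leqnn _)).
rewrite (eq_bigr (fun i => \sum_(1 <= k < (absn x).+1) x i %/ q ^ k)) => [|i _].
  rewrite (eq_bigr (fun k => \sum_(i < n) x i %/ q ^ k + summod x (q ^ k) %/ q ^ k))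
    => [|k _]; last by rewrite /absn divn_sum ?expn_gt0 ?q_gt0.
  by rewrite big_split /= exchange_big /= addnC => /addIn.
by rewrite (@logn_fact_le q _ (absn x) q_pr) // /absn (bigD1 i) //= leq_addr.
Qed.

Lemma multinom_coprimeP q : prime q ->
  ~~ (q %| multinom x) <-> forall k, summod x (q ^ k) < q ^ k.
Proof.
move=> q_pr; have q_gt1 := prime_gt1 q_pr.
have ->: ~~ (q %| multinom x) = (logn q (multinom x) == 0).
  by rewrite -leqn0 leqNgt logn_gt0 mem_primes q_pr multinom_gt0.
rewrite logn_multinom // sum_nat_seq_eq0; split => [/allP summod_small k|lt_summod].
  case: (ltnP k.-1 (absn x)) => [lt_k_abs|le_abs_k].
    case: k lt_k_abs => [_|k lt_k_abs].
      by rewrite /summod big1 // => i _; rewrite modn1.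
    have := summod_small k.+1; rewrite mem_index_iota /= ltnS lt_k_abs.
    by rewrite -leqn0 leqNgt divn_gt0 ?expn_gt0 ?(ltnW q_gt1) // -ltnNge => ->.
  apply: leq_ltn_trans (ltn_expl k q_gt1); apply: leq_trans (leq_pred k).
  by apply: leq_trans le_abs_k; apply: leq_sum => i _; apply: leq_mod.
apply/allP => k _; apply/implyP => _.
by rewrite divn_small // expn_gt0 (ltnW q_gt1).
Qed.

Lemma odd_multinomP : odd (multinom x) <-> forall k, summod x (2 ^ k) < 2 ^ k.
Proof. by rewrite -multinom_coprimeP // dvdn2 negbK. Qed.

Lemma summod_ge_pair d i i' : i != i' -> x i %% d + x i' %% d <= summod x d.
Proof. by move=> ii'; rewrite /summod (bigD1 i) //= leq_add2l (bigD1 i') 1?eq_sym //= leq_addr. Qed.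

End Kummer.

Section Hat.

Variables (n : nat) (x : 'I_n -> nat) (j : 'I_n).

Lemma hat_id : hat x j j = (x j).-1.
Proof. by rewrite /hat eqxx. Qed.

Lemma hat_ne i : i != j -> hat x j i = x i.
Proof. by rewrite /hat => /negbTE ->. Qed.

Lemma summod_hat d : summod (hat x j) d + x j %% d = summod x d + (x j).-1 %% d.
Proof.
rewrite /summod (bigD1 j) //= [in RHS](bigD1 j) //= hat_id.
rewrite (eq_bigr (fun i => x i %% d)) => [|i ij]; last by rewrite hat_ne.
lia.
Qed.

Lemma odd_multinom_hatP : odd (multinom_hat x j) <->
  0 < x j /\ forall k, summod (hat x j) (2 ^ k) < 2 ^ k.
Proof.
rewrite /multinom_hat lt0n; case: eqP => [_|_]; first by split => [|[]].
by rewrite odd_multinomP; split => [|[]].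
Qed.

End Hat.

Lemma pred_modn_dvd (m b : nat) : 0 < b -> m %| b -> b.-1 %% m = m.-1.
Proof.
case: m => [|m] b_gt0; first by rewrite dvd0n => /eqP b0; rewrite b0 in b_gt0.
case/dvdnP => [[|t] eq_b]; first by rewrite eq_b in b_gt0.
by rewrite eq_b mulSn addSn /= addnC modnMDl modn_small.
Qed.

Section ExactValuation.

Variables (n : nat) (a : 'I_n -> nat) (p : nat).
Hypothesis dvd_a : forall i, 2 ^ p %| a i.

Lemma expn_double : 2 ^ p.+1 = 2 ^ p + 2 ^ p.
Proof. by rewrite expnS mul2n addnn. Qed.

Lemma summod_low k : k <= p -> summod a (2 ^ k) = 0.
Proof.
move=> le_kp; rewrite /summod big1 // => i _; apply/eqP.
exact: dvdn_trans (dvdn_exp2l 2 le_kp) (dvd_a i).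
Qed.

Lemma modn_exact i : ~~ (2 ^ p.+1 %| a i) -> a i %% 2 ^ p.+1 = 2 ^ p.
Proof.
have [t ->] := dvdnP (dvd_a i).
rewrite expnS -muln_modl modn2 dvdn_pmul2r ?expn_gt0 // dvdn2 negbK => ->.
by rewrite mul1n.
Qed.

Lemma carry_of_pair (x : 'I_n -> nat) i i' : i != i' ->
  2 ^ p <= x i %% 2 ^ p.+1 -> 2 ^ p <= x i' %% 2 ^ p.+1 ->
  ~ summod x (2 ^ p.+1) < 2 ^ p.+1.
Proof.
move=> ii' ge_i ge_i'; apply/negP; rewrite -leqNgt {1}expn_double.
exact: leq_trans (leq_add ge_i ge_i') (summod_ge_pair x _ ii').
Qed.

Lemma summod_hat_low l k : k <= p -> 0 < a l ->
  summod (hat a l) (2 ^ k) = (2 ^ k).-1.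
Proof.
move=> le_kp a_gt0; have dvd_al := dvdn_trans (dvdn_exp2l 2 le_kp) (dvd_a l).
have := summod_hat a l (2 ^ k).
by rewrite summod_low // pred_modn_dvd // (eqP dvd_al) addn0.
Qed.

Lemma summod_hat_high l k : p < k -> ~~ (2 ^ p.+1 %| a l) ->
  summod a (2 ^ k) = (summod (hat a l) (2 ^ k)).+1.
Proof.
move=> lt_pk ndvd_al; have := summod_hat a l (2 ^ k).
have ndvd_k : ~~ (2 ^ k %| a l).
  by apply: contra ndvd_al; apply: dvdn_trans (dvdn_exp2l 2 lt_pk).
case: (a l) ndvd_k => [|b]; first by rewrite dvdn0.
by rewrite modnS /= => /negbTE ->; lia.
Qed.

Lemma odd_multinom_hat_exact l : ~~ (2 ^ p.+1 %| a l) ->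
  odd (multinom_hat a l) <-> forall k, p < k -> summod a (2 ^ k) <= 2 ^ k.
Proof.
move=> ndvd_al; have al_gt0 : 0 < a l by case: (a l) ndvd_al; rewrite ?dvdn0.
rewrite odd_multinom_hatP; split => [[_ lt_hat] k lt_pk|le_summod].
  by rewrite (summod_hat_high lt_pk ndvd_al).
split=> // k; case: (leqP k p) => [le_kp|lt_pk].
  by rewrite summod_hat_low // prednK ?expn_gt0.
by rewrite -ltnS -(summod_hat_high lt_pk ndvd_al) ltnS le_summod.
Qed.

Lemma ndvd_of_odd_multinom_hat i l : i != l -> ~~ (2 ^ p.+1 %| a l) ->
  odd (multinom_hat a i) -> ~~ (2 ^ p.+1 %| a i).
Proof.
move=> il ndvd_al /odd_multinom_hatP[ai_gt0 lt_hat]; apply/negP => dvd_ai.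
apply: (carry_of_pair il _ _ (lt_hat _)).
  rewrite hat_id pred_modn_dvd // -ltnS prednK ?expn_gt0 //.
  by rewrite expn_double -addn1 leq_add2l expn_gt0.
by rewrite hat_ne 1?eq_sym // modn_exact.
Qed.

Lemma odd_multinom_single_exact j : ~~ (2 ^ p.+1 %| a j) ->
  (forall i, i != j -> 2 ^ p.+1 %| a i) ->
  (forall k, p < k -> summod a (2 ^ k) <= 2 ^ k) -> odd (multinom a).
Proof.
move=> ndvd_aj dvd_others le_summod; apply/odd_multinomP => k.
case: (leqP k p) => [le_kp|lt_pk]; first by rewrite summod_low // expn_gt0.
have dvd_k := dvdn_exp2l 2 lt_pk.
have mod_k m : (2 ^ p.+1 %| m %% 2 ^ k) = (2 ^ p.+1 %| m).
  by rewrite /dvdn (modn_dvdm _ dvd_k).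
have ndvd_summod : ~~ (2 ^ p.+1 %| summod a (2 ^ k)).
  rewrite /summod (bigD1 j) //= dvdn_addl ?mod_k //.
  by apply: dvdn_sum => i ij; rewrite mod_k dvd_others.
rewrite ltn_neqAle le_summod // andbT.
by apply: contraNneq ndvd_summod => ->.
Qed.

Variable l0 : 'I_n.
Hypothesis ndvd_al0 : ~~ (2 ^ p.+1 %| a l0).

Lemma odd_multinom_case : odd (multinom a) ->
  (forall i, odd (multinom_hat a i) <-> i = l0) /\
  (forall i, ~~ (2 ^ p.+1 %| a i) <-> i = l0).
Proof.
move=> /odd_multinomP lt_summod.
have exact_eq i : ~~ (2 ^ p.+1 %| a i) -> i = l0.
  move=> ndvd_ai; apply/eqP/negPn/negP => il0.
  by apply: (carry_of_pair il0 _ _ (lt_summod _)); rewrite modn_exact.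
split=> i; last by split=> [/exact_eq|->].
split=> [odd_i|->]; last first.
  by apply/(odd_multinom_hat_exact ndvd_al0) => k _; apply: ltnW.
have [//|il0] := eqVneq i l0.
exact/exact_eq/(ndvd_of_odd_multinom_hat il0 ndvd_al0).
Qed.

Lemma even_multinom_case j : ~~ odd (multinom a) -> odd (multinom_hat a j) ->
  exists l : 'I_n, l != j /\
    (forall i, i != j -> (odd (multinom_hat a i) <-> i = l)) /\
    (forall i, i != j -> (~~ (2 ^ p.+1 %| a i) <-> i = l)).
Proof.
move=> even_a odd_j; have ndvd_aj : ~~ (2 ^ p.+1 %| a j).
  have [->//|jl0] := eqVneq j l0.
  exact: ndvd_of_odd_multinom_hat jl0 ndvd_al0 odd_j.
have le_summod := (odd_multinom_hat_exact ndvd_aj).1 odd_j.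
have [l /andP[lj ndvd_al]] : exists l, (l != j) && ~~ (2 ^ p.+1 %| a l).
  apply/existsP; apply: contraNT even_a => /existsPn others.
  apply: (odd_multinom_single_exact ndvd_aj) => // i ij.
  by move: (others i); rewrite ij negbK.
have [_ lt_hat] := (odd_multinom_hatP a j).1 odd_j.
have exact_eq i : i != j -> ~~ (2 ^ p.+1 %| a i) -> i = l.
  move=> ij ndvd_ai; apply/eqP/negPn/negP => il.
  by apply: (carry_of_pair il _ _ (lt_hat _)); rewrite !hat_ne ?modn_exact.
exists l; split=> //; split=> i ij; last by split=> [/(exact_eq i ij)|->].
split=> [odd_i|->]; last exact/(odd_multinom_hat_exact ndvd_al).
exact/(exact_eq i ij)/(ndvd_of_odd_multinom_hat ij ndvd_aj).
Qed.

End ExactValuation.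

Theorem mainTheorem6 (n : nat) (a : 'I_n -> nat) (p : nat) :
  (exists i, a i != 0) ->
  (* 2^p is the largest power of 2 dividing all a_i *)
  (forall i, 2 ^ p %| a i) -> ~ (forall i, 2 ^ p.+1 %| a i) ->
  (odd (multinom a) ->
     exists l : 'I_n,
       (forall i, odd (multinom_hat a i) <-> i = l) /\
       (forall i, ~~ (2 ^ p.+1 %| a i) <-> i = l))
  /\
  (forall j : 'I_n, ~~ odd (multinom a) -> odd (multinom_hat a j) ->
     exists l : 'I_n, l != j /\
       (forall i, i != j -> (odd (multinom_hat a i) <-> i = l)) /\
       (forall i, i != j -> (~~ (2 ^ p.+1 %| a i) <-> i = l))).
Proof.
(* a <> 0 is implied by the last hypothesis. *)
move=> _ dvd_a ndvd_all.
have /forallPn[l0 ndvd_al0] : ~~ [forall i, 2 ^ p.+1 %| a i].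
  by apply/negP => /forallP.
split; first by exists l0; apply: odd_multinom_case.
exact: (even_multinom_case dvd_a ndvd_al0).
Qed.
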